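(* Let $\omega\ge1$ and $n>2$ be integers, $r=2^\omega$, $R=2^{\omega n}$, and let $p$ be a positive odd integer. Let $T\ge0$ be an integer and $T_i=\lfloor T/r^{i-1}\rfloor\bmod r$ for $i\ge1$. For $1\le i\le n-2$ let $M_i$ be an integer with $M_i\equiv r^{-n+i+1}\pmod p$, let $H_i=T_iM_i$, and let $T^{(n-2)}=\lfloor T/r^{n-2}\rfloor+\sum_{i=1}^{n-2}H_i$. Then $$TR^{-1}\equiv T^{(n-2)}r^{-2}\pmod p.$$
   Context: Negative powers of $r$ and $R$ denote powers of their inverses modulo $p$ (which exist since $p$ is odd). $TR^{-1}\bmod p$ is the Montgomery reduction $\mathrm{REDC}(T)$. *)

From Stdlib Require Import ZArith List.
Open Scope Z_scope.

Definition congr (p a b : Z) : Prop := (p | a - b)%Z.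

Definition inv_mod (p a u : Z) : Prop := congr p (a * u) 1.

Definition digit (r T : Z) (i : nat) : Z := (T / r ^ (Z.of_nat i - 1)) mod r.

(* sum_{i=a}^{b} f i  (empty if b < a) *)
Definition sum_range (a b : nat) (f : nat -> Z) : Z :=
  fold_right Z.add 0 (map f (seq a (S b - a))).

(* Split T into its top part and its n - 2 low base-r digits:
   T = r^(n-2) (T / r^(n-2)) + sum_i T_i r^(i-1).  Modulo p we have R^-1 = r^-n,
   so multiplying by R^-1 turns the top part into (T / r^(n-2)) r^-2 and the
   i-th digit term into T_i r^(-n+i-1) = T_i M_i r^-2. *)

From Stdlib Require Import ZArith List Lia Setoid Morphisms.
Open Scope Z_scope.

Lemma congr_refl p a : congr p a a.
Proof. unfold congr. rewrite Z.sub_diag. apply Z.divide_0_r. Qed.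

Lemma congr_sym p a b : congr p a b -> congr p b a.
Proof.
  unfold congr. intros H. replace (b - a) with (- (a - b)) by ring.
  now apply Z.divide_opp_r.
Qed.

Lemma congr_trans p a b c : congr p a b -> congr p b c -> congr p a c.
Proof.
  unfold congr. intros Hab Hbc. replace (a - c) with ((a - b) + (b - c)) by ring.
  now apply Z.divide_add_r.
Qed.

#[local] Instance congr_equivalence p : Equivalence (congr p).
Proof. split; red; [apply congr_refl | apply congr_sym | apply congr_trans]. Qed.

#[local] Instance add_congr p : Proper (congr p ==> congr p ==> congr p) Z.add.
Proof.
  intros a b Hab c d Hcd. unfold congr in *.
  replace (a + c - (b + d)) with ((a - b) + (c - d)) by ring.
  now apply Z.divide_add_r.
Qed.

#[local] Instance mul_congr p : Proper (congr p ==> congr p ==> congr p) Z.mul.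
Proof.
  intros a b Hab c d Hcd. unfold congr in *.
  replace (a * c - b * d) with ((a - b) * c + b * (c - d)) by ring.
  apply Z.divide_add_r; [apply Z.divide_mul_l | apply Z.divide_mul_r]; assumption.
Qed.

Lemma pow_congr p a b k : congr p a b -> congr p (a ^ k) (b ^ k).
Proof.
  intros Hab. destruct (Z_lt_le_dec k 0) as [Hk | Hk].
  - rewrite !Z.pow_neg_r by lia. reflexivity.
  - pattern k. apply natlike_ind; [reflexivity | | exact Hk].
    intros j Hj IH. rewrite !Z.pow_succ_r by lia. now rewrite IH, Hab.
Qed.

Lemma inv_mod_pow p a x k : 0 <= k -> inv_mod p a x -> inv_mod p (a ^ k) (x ^ k).
Proof.
  unfold inv_mod. intros Hk Hax.
  rewrite <- Z.pow_mul_l, (pow_congr _ _ _ k Hax), Z.pow_1_l by lia. reflexivity.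
Qed.

Lemma inv_mod_unique p a u v : inv_mod p a u -> inv_mod p a v -> congr p u v.
Proof.
  unfold inv_mod. intros Hu Hv.
  transitivity (u * (a * v)); [rewrite Hv; ring_simplify; reflexivity |].
  replace (u * (a * v)) with (v * (a * u)) by ring.
  rewrite Hu. ring_simplify. reflexivity.
Qed.

Lemma pow_mul_inv_mod p a x k j : 0 <= k -> 0 <= j -> inv_mod p a x ->
  congr p (a ^ k * x ^ (k + j)) (x ^ j).
Proof.
  intros Hk Hj Hax.
  rewrite Z.pow_add_r, Z.mul_assoc by lia.
  pose proof (inv_mod_pow p a x k Hk Hax) as Hpow. unfold inv_mod in Hpow.
  rewrite Hpow. ring_simplify. reflexivity.
Qed.

Lemma sum_range_succ (m : nat) (f : nat -> Z) :
  sum_range 1 (S m) f = sum_range 1 m f + f (S m).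
Proof.
  unfold sum_range. replace (S (S m) - 1)%nat with (S m) by lia.
  replace (S m - 1)%nat with m by lia.
  rewrite seq_S, map_app, fold_right_app. simpl.
  replace (1 + m)%nat with (S m) by lia.
  induction (seq 1 m) as [| i l IH]; simpl; [ring | rewrite IH; ring].
Qed.

Lemma sum_range_mul_r (m : nat) (f : nat -> Z) c :
  sum_range 1 m f * c = sum_range 1 m (fun i => f i * c).
Proof.
  unfold sum_range.
  induction (seq 1 (S m - 1)) as [| i l IH]; simpl; [ring | rewrite <- IH; ring].
Qed.

Lemma sum_range_congr p (m : nat) (f g : nat -> Z) :
  (forall i, (1 <= i <= m)%nat -> congr p (f i) (g i)) ->
  congr p (sum_range 1 m f) (sum_range 1 m g).
Proof.
  induction m as [| m IH]; intros Hfg.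
  - apply congr_refl.
  - rewrite !sum_range_succ.
    apply add_congr; [apply IH; intros; apply Hfg; lia | apply Hfg; lia].
Qed.

Lemma mod_pow_digits r T (m : nat) : 0 < r ->
  T mod r ^ Z.of_nat m = sum_range 1 m (fun i => digit r T i * r ^ (Z.of_nat i - 1)).
Proof.
  intros Hr. induction m as [| m IH].
  - apply Z.mod_1_r.
  - rewrite sum_range_succ, <- IH. unfold digit.
    replace (Z.of_nat (S m) - 1) with (Z.of_nat m) by lia.
    rewrite Nat2Z.inj_succ, Z.pow_succ_r, (Z.mul_comm r), Z.rem_mul_r by lia.
    ring.
Qed.

Lemma digits_expansion r T (m : nat) : 0 < r ->
  T = r ^ Z.of_nat m * (T / r ^ Z.of_nat m)
      + sum_range 1 m (fun i => digit r T i * r ^ (Z.of_nat i - 1)).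
Proof.
  intros Hr. rewrite <- mod_pow_digits by exact Hr.
  apply Z.div_mod. apply Z.pow_nonzero; lia.
Qed.

(* Here x stands for r^-1 and m for n - 2, so x^(m+2) = R^-1 and
   x^(m+1-i) = r^(-n+i+1). *)
Lemma partial_redc_congr p r x T (m : nat) (M : nat -> Z) :
  0 < r -> inv_mod p r x ->
  (forall i, (1 <= i <= m)%nat -> congr p (M i) (x ^ (Z.of_nat m + 1 - Z.of_nat i))) ->
  congr p (T * x ^ (Z.of_nat m + 2))
    ((T / r ^ Z.of_nat m + sum_range 1 m (fun i => digit r T i * M i)) * x ^ 2).
Proof.
  intros Hr Hrx HM.
  rewrite (digits_expansion r T m Hr) at 1.
  rewrite !Z.mul_add_distr_r, !sum_range_mul_r.
  apply add_congr.
  - replace (r ^ Z.of_nat m * (T / r ^ Z.of_nat m) * x ^ (Z.of_nat m + 2))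
      with (T / r ^ Z.of_nat m * (r ^ Z.of_nat m * x ^ (Z.of_nat m + 2))) by ring.
    rewrite (pow_mul_inv_mod p r x) by (lia || assumption). reflexivity.
  - apply sum_range_congr. intros i Hi.
    rewrite (HM i Hi).
    replace (Z.of_nat m + 2) with (Z.of_nat i - 1 + (Z.of_nat m + 1 - Z.of_nat i + 2))
      by lia.
    rewrite <- Z.mul_assoc, (pow_mul_inv_mod p r x), Z.pow_add_r by (lia || assumption).
    rewrite Z.mul_assoc. reflexivity.
Qed.

Theorem lemma3 (w n : nat) (p T : Z) (M : nat -> Z) (rinv Rinv : Z) :
  (1 <= w)%nat -> (2 < n)%nat ->
  0 < p -> Z.odd p = true -> 0 <= T ->
  (* rinv = r^{-1} mod p, Rinv = R^{-1} mod p, with r = 2^w, R = 2^(w n) *)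
  inv_mod p (2 ^ Z.of_nat w) rinv ->
  inv_mod p (2 ^ (Z.of_nat w * Z.of_nat n)) Rinv ->
  (* M_i ≡ r^{-n+i+1} = (r^{-1})^{n-i-1} (mod p) for 1 <= i <= n-2 *)
  (forall i : nat, (1 <= i <= n - 2)%nat ->
     congr p (M i) (rinv ^ (Z.of_nat n - Z.of_nat i - 1))) ->
  congr p (T * Rinv)
    ((T / (2 ^ Z.of_nat w) ^ (Z.of_nat n - 2)
      + sum_range 1 (n - 2) (fun i => digit (2 ^ Z.of_nat w) T i * M i))
     * rinv ^ 2).
Proof.
  (* The oddness of p only guarantees that the inverses exist; given them, the
     congruence holds for every modulus and every T. *)
  intros _ Hn _ _ _ Hr HR HM.
  set (r := 2 ^ Z.of_nat w) in *.
  assert (Hr_pos : 0 < r) by (apply Z.pow_pos_nonneg; lia).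
  assert (HRinv : congr p Rinv (rinv ^ (Z.of_nat (n - 2) + 2))).
  { apply (inv_mod_unique p (r ^ Z.of_nat n)).
    - unfold r. rewrite <- Z.pow_mul_r by lia. exact HR.
    - replace (Z.of_nat (n - 2) + 2) with (Z.of_nat n) by lia.
      apply inv_mod_pow; [lia | exact Hr]. }
  rewrite HRinv.
  replace (Z.of_nat n - 2) with (Z.of_nat (n - 2)) by lia.
  apply partial_redc_congr; [exact Hr_pos | exact Hr |].
  intros i Hi. rewrite (HM i Hi).
  replace (Z.of_nat n - Z.of_nat i - 1) with (Z.of_nat (n - 2) + 1 - Z.of_nat i) by lia.
  reflexivity.
Qed.
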